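(* Every symmetric log-concave probability measure $\mu$ on $\mathbb R$ satisfies the dilation inequality for $\mathcal K_s^1(\mathbb R)$ with $\kappa=2$, i.e. $\mu^*(K)\ge-2(1-\mu(K))\log(1-\mu(K))$ for every nonempty symmetric open interval $K\subset\mathbb R$.
   Context: $\mathcal K_s^1(\mathbb R)$: nonempty symmetric open convex subsets of $\mathbb R$. For Borel $A\subset\mathbb R$, $\varepsilon\in(0,1)$: $A_\varepsilon:=A\cup\{x:\exists y,\ \int_0^1\mathbf 1_A((1-t)x+ty)\,dt>1-\varepsilon\}$; $\mu^*(A):=\liminf_{\varepsilon\downarrow0}(\mu(A_\varepsilon)-\mu(A))/\varepsilon$. A measure $\mu$ is log-concave if $\mu((1-t)A+tB)\ge\mu(A)^{1-t}\mu(B)^t$ for all compact $A,B$ and $t\in(0,1)$. *)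

From HB Require Import structures.
From mathcomp Require Import all_boot all_order all_algebra.
From mathcomp Require Import all_classical all_reals all_analysis.
Set Implicit Arguments. Unset Strict Implicit. Unset Printing Implicit Defensive.
Import Order.TTheory GRing.Theory Num.Theory.
Import numFieldNormedType.Exports.
Local Open Scope classical_set_scope.
Local Open Scope ring_scope.

(* Measures on R are measures on the Borel sigma-algebra of R
   (the canonical measurable structure on a realType). *)

Definition symmetric_measure (R : realType) (mu : set R -> \bar R) : Prop :=
  forall A : set R, measurable A -> mu [set - x | x in A] = mu A.

Definition mink_comb (R : realType) (t : R) (A B : set R) : set R :=
  [set (1 - t) * a + t * b | a in A & b in B].

Definition log_concave (R : realType) (mu : set R -> \bar R) : Prop :=
  forall (A B : set R) (t : R), compact A -> compact B -> 0 < t < 1 ->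
    (((fine (mu A)) `^ (1 - t) * (fine (mu B)) `^ t)%:E <= mu (mink_comb t A B))%E.

Definition dil_set (R : realType) (A : set R) (eps : R) : set R :=
  A `|` [set x | exists y : R,
    ((1 - eps)%:E < \int[@lebesgue_measure R]_(t in `[0%R, 1%R])
                      (\1_A ((1 - t) * x + t * y))%:E)%E].

(* mu^*(A) := liminf_{eps -> 0+} (mu(A_eps) - mu(A)) / eps
            = sup_{delta > 0} inf_{0 < eps < delta} ..., eps ranging in (0,1) *)
Definition dil_ratio (R : realType) (mu : set R -> \bar R) (A : set R) (eps : R)
  : \bar R := ((mu (dil_set A eps) - mu A) * (eps^-1)%:E)%E.

Definition mu_star (R : realType) (mu : set R -> \bar R) (A : set R) : \bar R :=
  ereal_sup [set ereal_inf [set dil_ratio mu A eps | eps in [set e : R | 0 < e < Num.min delta 1]]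
            | delta in [set d : R | 0 < d]].

Definition Ks1 (R : realType) (K : set R) : Prop :=
  K !=set0 /\ open K /\ (forall x, K x -> K (- x)) /\
  (forall x y (t : R), K x -> K y -> 0 <= t <= 1 -> K ((1 - t) * x + t * y)).

(* A set of K_s^1(R) is R itself or an interval (-a, a), and the eps-dilation of (-a, a) is
   (-a r, a r) with r = (1 + eps) / (1 - eps) = 1 + 2 eps + O(eps^2).  With G(x) = mu[x, +oo),
   the difference quotient is therefore 2 (G(a) - G(a r)) / eps.  Log-concavity of mu makes
   ln G concave, and symmetry gives G(0) >= 1/2; concavity of ln G on [0, a r] then yields
   G(a r) <= G(a) (2 G(a))^(r - 1).  Since 1 - mu(-a, a) = 2 G(a), letting eps -> 0 in
   1 - (2 G(a))^(r - 1) ~ -(r - 1) ln (2 G(a)) gives the bound -2 (1 - mu K) ln (1 - mu K). *)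

From HB Require Import structures.
From mathcomp Require Import all_boot all_order all_algebra.
From mathcomp Require Import all_classical all_reals all_analysis.
From mathcomp Require Import measurable_realfun ring lra.
Import Order.TTheory GRing.Theory Num.Theory.
Import numFieldNormedType.Exports.
Local Open Scope classical_set_scope.
Local Open Scope ring_scope.

Section segment_fraction.
Variable R : realType.
Local Notation lam := (@lebesgue_measure R).
Local Notation seg_frac A x y :=
  (\int[lam]_(t in `[0%R, 1%R]) (\1_A ((1 - t) * x + t * y))%:E)%E.

Lemma measurable_segment_preimage (A : set R) (x y : R) : measurable A ->
  measurable [set t | A ((1 - t) * x + t * y)].
Proof.
move=> mA; have mf : measurable_fun setT (fun t : R => (1 - t) * x + t * y).
  by apply: measurable_funD; apply: measurable_funM => //; exact: measurable_funB.
by have := mf measurableT _ mA; rewrite setTI.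
Qed.

Lemma seg_fracE (A : set R) (x y : R) : measurable A ->
  seg_frac A x y = lam ([set t | A ((1 - t) * x + t * y)] `&` `[0%R, 1%R]).
Proof.
by move=> mA; rewrite -integral_indic //; exact: measurable_segment_preimage.
Qed.

Lemma seg_frac_le (A : set R) (x y al be : R) : measurable A -> al <= be ->
  (forall t, 0 <= t <= 1 -> A ((1 - t) * x + t * y) -> al <= t <= be) ->
  (seg_frac A x y <= (be - al)%:E)%E.
Proof.
move=> mA ab H; rewrite seg_fracE //.
apply: (@le_trans _ _ (lam `[al, be])).
  apply: le_measure; rewrite ?inE.
  - by apply: measurableI => //; exact: measurable_segment_preimage.
  - exact: measurable_itv.
  by move=> t [/= At]; rewrite !in_itv /= => t01; exact: H.
by rewrite lebesgue_measure_itv /= lte_fin; case: ltP => // _; rewrite lee_fin subr_ge0.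
Qed.

Lemma seg_frac_ge (A : set R) (x y al be : R) : measurable A ->
  0 <= al -> al <= be -> be <= 1 ->
  (forall t, al < t < be -> A ((1 - t) * x + t * y)) ->
  ((be - al)%:E <= seg_frac A x y)%E.
Proof.
move=> mA a0 ab b1 H; rewrite seg_fracE //.
apply: (@le_trans _ _ (lam `]al, be[)).
  rewrite lebesgue_measure_itv /= lte_fin.
  case: ltP => // ba; have -> : be = al by apply/eqP; rewrite eq_le ab ba.
  by rewrite subrr.
apply: le_measure; rewrite ?inE; first exact: measurable_itv.
  by apply: measurableI => //; exact: measurable_segment_preimage.
move=> t; rewrite /= in_itv /= => /andP[al_t t_be].
split; first by apply: H; rewrite al_t t_be.
rewrite in_itv /=; apply/andP; split; lra.
Qed.

Lemma seg_frac_opp (A : set R) (x y : R) : (forall z, (- z \in A) = (z \in A)) ->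
  seg_frac A (- x) (- y) = seg_frac A x y.
Proof.
move=> symA; apply: eq_integral => t _; congr (_%:E); rewrite /indic.
have -> : (1 - t) * - x + t * - y = - ((1 - t) * x + t * y) by ring.
by rewrite symA.
Qed.

Lemma sym_itv_opp (a z : R) : (- z \in [set` `]-a, a[]) = (z \in [set` `]-a, a[]).
Proof. by rewrite !mem_setE !in_itv /=; apply/idP/idP => /andP[? ?]; apply/andP; split; lra. Qed.

(* The supremum over [y] is [2 a / (x + a)], attained at [y = -a]. *)
Lemma seg_frac_sym_itv_gt (a x c : R) : 0 < a -> a <= x ->
  (exists y, (c%:E < seg_frac [set` `]-a, a[] x y)%E) <-> c < 2 * a / (x + a).
Proof.
move=> a0 ax; have xa0 : 0 < x + a by lra.
have frac_eq : 2 * a / (x + a) = 1 - (x - a) / (x + a) by field; lra.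
split=> [[y]|c_lt].
  rewrite -lte_fin => /lt_le_trans; apply; rewrite frac_eq.
  have [ya|ya] := lerP (- a) y.
    apply: seg_frac_le => //; first by rewrite ler_pdivrMr //; lra.
    move=> t /andP[t0 t1]; rewrite /= in_itv /= => /andP[h1 h2].
    by rewrite t1 andbT ler_pdivrMr //; nra.
  have d0 : 0 < x - y by lra.
  apply: (@le_trans _ _ (((x + a) / (x - y) - (x - a) / (x - y))%:E)).
    apply: seg_frac_le => //; first by rewrite ler_pM2r ?invr_gt0 //; lra.
    move=> t /andP[t0 t1]; rewrite /= in_itv /= => /andP[h1 h2].
    by rewrite ler_pdivrMr // ler_pdivlMr //; apply/andP; split; nra.
  rewrite -frac_eq lee_fin -mulrBl.
  have -> : x + a - (x - a) = 2 * a by ring.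
  by rewrite ler_pM2l ?lef_pV2 ?posrE //; lra.
exists (- a); rewrite -lte_fin in c_lt; apply: (lt_le_trans c_lt).
rewrite frac_eq; apply: seg_frac_ge => //.
- by apply: divr_ge0; lra.
- by rewrite ler_pdivrMr //; lra.
move=> t /andP[h1 h2]; rewrite /= in_itv /=.
by move: h1; rewrite ltr_pdivrMr // => h1; apply/andP; split; nra.
Qed.

Lemma dilation_threshold (a eps z : R) : 0 < a -> 0 < eps < 1 -> a <= z ->
  (1 - eps < 2 * a / (z + a)) = (z < a * (1 + eps) / (1 - eps)).
Proof.
move=> a0 /andP[e0 e1] az.
rewrite ltr_pdivlMr; last lra.
rewrite ltr_pdivlMr; last lra.
by apply/idP/idP => ?; nra.
Qed.

Lemma dil_set_sym_itv (a eps : R) : 0 < a -> 0 < eps < 1 ->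
  dil_set [set` `]-a, a[] eps =
  [set` `]-(a * (1 + eps) / (1 - eps)), a * (1 + eps) / (1 - eps)[].
Proof.
move=> a0 he; have /andP[e0 e1] := he.
set b := a * (1 + eps) / (1 - eps).
have ab : a <= b by rewrite /b ler_pdivlMr; nra.
have reach z : a <= z -> (exists y, ((1 - eps)%:E < seg_frac [set` `]-a, a[] z y)%E) <-> z < b.
  by move=> az; rewrite seg_frac_sym_itv_gt // dilation_threshold.
have reachN z : z <= - a -> (exists y, ((1 - eps)%:E < seg_frac [set` `]-a, a[] z y)%E) <-> - b < z.
  move=> za; have := reach (- z); rewrite ltrNl => <-; last lra.
  split=> -[y hy]; exists (- y); first by rewrite (seg_frac_opp _ _ _ (sym_itv_opp a)).
  by rewrite -[z]opprK (seg_frac_opp _ _ _ (sym_itv_opp a)).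
rewrite /dil_set; apply/seteqP; split => z /=.
- rewrite !in_itv /= => -[/andP[h1 h2]|hz]; first by apply/andP; split; lra.
  have [za|za] := lerP a z; first by rewrite (reach z za).1 // andbT; lra.
  have [za'|za'] := lerP z (- a); first by rewrite (reachN z za').1 //; lra.
  by apply/andP; split; lra.
- rewrite in_itv /= => /andP[h1 h2].
  have [za|za] := lerP a z; first by right; apply/reach.
  have [za'|za'] := lerP z (- a); first by right; apply/reachN.
  by left; rewrite /= in_itv /= za za'.
Qed.

End segment_fraction.

Section Ks1_shape.
Variable R : realType.

Lemma Ks1_norm_le {K : set R} {x z : R} : Ks1 K -> K x -> 0 < x -> `|z| <= x -> K z.
Proof.
move=> [_ [_ [symK convK]]] Kx x0 zx.
have := convK (- x) x ((z + x) / (2 * x)) (symK _ Kx) Kx.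
have -> : (1 - (z + x) / (2 * x)) * - x + (z + x) / (2 * x) * x = z by field; lra.
apply; move: zx; rewrite ler_norml => /andP[h1 h2].
by apply/andP; split; [apply: divr_ge0 | rewrite ler_pdivrMr]; lra.
Qed.

Lemma Ks1_setT_or_sym_itv (K : set R) : Ks1 K ->
  K = setT \/ exists2 a : R, 0 < a & K = [set` `]-a, a[].
Proof.
move=> hK; have [[x0 Kx0] [oK [symK convK]]] := hK.
have K0 : K 0.
  have := convK x0 (- x0) (1 / 2) Kx0 (symK _ Kx0).
  have -> : (1 - 1 / 2) * x0 + 1 / 2 * - x0 = 0 :> R by field.
  by apply; apply/andP; split; lra.
have [ubK|nubK] := pselect (has_ubound K); last first.
  left; apply/seteqP; split => // z _.
  have /existsNP [x /not_implyP [Kx xz]] : ~ (forall x, K x -> x <= `|z|).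
    by move=> h; apply: nubK; exists `|z|.
  have zx : `|z| < x by rewrite ltNge; apply/negP.
  apply: (Ks1_norm_le hK Kx); last exact: ltW.
  exact: le_lt_trans (normr_ge0 _) zx.
have supK : has_sup K by split => //; exists 0.
set a := sup K.
have aK : ubound K a := sup_upper_bound supK.
have Kna : ~ K a.
  move=> Ka; have : nbhs a K by move: oK; rewrite openE => /(_ a Ka).
  case/nbhs_ballP => e /= e0 sub.
  have /aK : K (a + e / 2) by apply: sub; rewrite ball_itv /= in_itv /=; apply/andP; split; lra.
  lra.
have a0 : 0 < a.
  by rewrite lt_neqAle aK // andbT; apply/eqP => a0; apply: Kna; rewrite -a0.
right; exists a => //; apply/seteqP; split => z.
- move=> Kz; rewrite /= in_itv /=.
  have za : z != a by apply/eqP => za; apply: Kna; rewrite -za.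
  have Nza : - z != a by apply/eqP => za'; apply: Kna; rewrite -za'; exact: symK.
  have := aK _ Kz; have := aK _ (symK _ Kz).
  rewrite !le_eqVlt (negbTE za) (negbTE Nza) /= => h1 h2.
  by apply/andP; split; lra.
- rewrite /= in_itv /= => /andP[h1 h2].
  have e0 : 0 < a - `|z| by rewrite subr_gt0 ltr_norml h1 h2.
  have [x Kx hx] := sup_adherent e0 supK.
  apply: (Ks1_norm_le hK Kx); rewrite -/a in hx; have := normr_ge0 z; lra.
Qed.

End Ks1_shape.

Section probability_fine.
Context {d : measure_display} {T : measurableType d} {R : realType} (P : probability T R).

Lemma probability_fineK (A : set T) : measurable A -> (fine (P A))%:E = P A.
Proof. by move=> mA; rewrite fineK // fin_num_measure. Qed.

Lemma fine_probability_le (A B : set T) : measurable A -> measurable B ->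
  A `<=` B -> fine (P A) <= fine (P B).
Proof.
move=> mA mB AB; rewrite -lee_fin !probability_fineK //.
by apply: le_measure; rewrite ?inE.
Qed.

Lemma fine_probabilityU (A B : set T) : measurable A -> measurable B ->
  A `&` B = set0 -> fine (P (A `|` B)) = fine (P A) + fine (P B).
Proof. by move=> mA mB AB; rewrite measureU // fineD // fin_num_measure. Qed.

End probability_fine.

Lemma mink_comb_itv (R : realType) (t x0 x1 c : R) : 0 < t < 1 -> 0 <= c ->
  mink_comb t [set` `[x0, x0 + c]] [set` `[x1, x1 + c]] =
  [set` `[(1 - t) * x0 + t * x1, (1 - t) * x0 + t * x1 + c]].
Proof.
move=> /andP[t0 t1] c0; rewrite /mink_comb; apply/seteqP; split => w /=.
- move=> [u]; rewrite /= in_itv /= => /andP[u1 u2] [v]; rewrite /= in_itv /= => /andP[v1 v2] <-.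
  by rewrite in_itv /=; apply/andP; split; nra.
- set z := (1 - t) * x0 + t * x1; rewrite in_itv /= => /andP[w1 w2].
  exists (x0 + (w - z)); first by rewrite /= in_itv /=; apply/andP; split; lra.
  exists (x1 + (w - z)); first by rewrite /= in_itv /=; apply/andP; split; lra.
  by rewrite /z; ring.
Qed.

Section upper_tail.
Context {R : realType} (mu : probability R R).

Definition upper_tail (x : R) : R := fine (mu [set` `[x, +oo[]).
Local Notation G := upper_tail.

Lemma upper_tail_ge0 (x : R) : 0 <= G x.
Proof. exact: fine_ge0. Qed.

Lemma upper_tail_le (x y : R) : x <= y -> G y <= G x.
Proof.
move=> xy; apply: fine_probability_le => // z /=; rewrite !in_itv /= !andbT.
exact: le_trans.
Qed.

Lemma upper_tail_cvg (x : R) : (fun n : nat => fine (mu [set` `[x, x + n%:R]])) @ \oo --> G x.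
Proof.
have mI (n : nat) : measurable [set` `[x, x + n%:R]] by exact: measurable_itv.
have UI : \bigcup_n [set` `[x, x + n%:R]] = [set` `[x, +oo[].
  apply/seteqP; split => y /=.
    by move=> [n _] /=; rewrite !in_itv /= andbT => /andP[].
  rewrite in_itv /= andbT => xy; exists (Num.truncn (y - x)).+1 => //=.
  by rewrite in_itv /= xy /=; have := truncnS_gt (y - x); lra.
have ndI : nondecreasing_seq (fun n : nat => [set` `[x, x + n%:R]]).
  move=> n k nk; apply/subsetPset => y /=; rewrite !in_itv /= => /andP[-> h] /=.
  by apply: le_trans h _; rewrite lerD2l ler_nat.
have := @nondecreasing_cvg_mu _ _ _ mu _ mI _ ndI; rewrite UI => /(_ (measurable_itv _)).
rewrite -[X in _ --> X](probability_fineK mu); last exact: measurable_itv.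
by move=> /fine_cvgP[_].
Qed.

Hypothesis sym_mu : symmetric_measure mu.

Lemma upper_tail_sym (x : R) : fine (mu [set` `]-oo, - x]]) = G x.
Proof.
rewrite /upper_tail -(sym_mu _ (measurable_itv `[x, +oo[)); congr (fine (mu _)).
apply/seteqP; split => z /=.
- by rewrite in_itv /= => hz; exists (- z); rewrite ?opprK // in_itv /= andbT lerNr.
- by move=> [y]; rewrite !in_itv /= ?andbT => hy <-; rewrite lerN2.
Qed.

Lemma upper_tail0 : 1 / 2 <= G 0.
Proof.
have G0_le : fine (mu [set` `]-oo, 0[]) <= G 0.
  rewrite -upper_tail_sym oppr0; apply: fine_probability_le => // z /=.
  by rewrite !in_itv /=; exact: ltW.
have : fine (mu setT) = fine (mu [set` `]-oo, 0[]) + G 0.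
  rewrite -fine_probabilityU //; last first.
    by apply/seteqP; split => z //= []; rewrite !in_itv /= ?andbT; lra.
  congr (fine (mu _)); apply/seteqP; split => z //= _.
  by rewrite !in_itv /= ?andbT; case: (ltP z 0) => _; [left | right].
rewrite probability_setT /=; lra.
Qed.

Lemma probability_sym_itv (b : R) : 0 < b -> fine (mu [set` `]-b, b[]) = 1 - 2 * G b.
Proof.
move=> b0.
have : fine (mu setT) = fine (mu [set` `]-b, b[]) + (fine (mu [set` `]-oo, - b]]) + G b).
  rewrite -fine_probabilityU //; last first.
    by apply/seteqP; split => z //= []; rewrite !in_itv /= ?andbT => h1 h2; lra.
  rewrite -fine_probabilityU //; last first.
  - by apply/seteqP; split => z //= []; rewrite !in_itv /= ?andbT => /andP[h1 h2] [] h3; lra.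
  - exact: measurableU.
  congr (fine (mu _)); apply/seteqP; split => z //= _; rewrite !in_itv /= ?andbT.
  case: (ltP (- b) z) => h1; last by right; left.
  by case: (ltP z b) => h2; [left | right; right].
rewrite probability_setT upper_tail_sym /=; lra.
Qed.

Lemma upper_tail_le_half (a : R) : 0 < a -> G a <= 1 / 2.
Proof.
move=> a0; have : 0 <= fine (mu [set` `]-a, a[]) by exact: fine_ge0.
rewrite probability_sym_itv //; lra.
Qed.

Hypothesis lc_mu : log_concave mu.

(* Half-lines are not compact: apply log-concavity to [[x, x + n]] and let [n] grow. *)
Lemma upper_tail_log_concave {t x0 x1 : R} : 0 < t < 1 -> 0 < G x0 -> 0 < G x1 ->
  (1 - t) * ln (G x0) + t * ln (G x1) <= ln (G ((1 - t) * x0 + t * x1)).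
Proof.
move=> t01 G0 G1; set z := (1 - t) * x0 + t * x1.
pose u n := fine (mu [set` `[x0, x0 + n%:R]]).
pose v n := fine (mu [set` `[x1, x1 + n%:R]]).
have uv_le n : u n `^ (1 - t) * v n `^ t <= G z.
  have := lc_mu _ _ _ (@segment_compact _ x0 (x0 + n%:R)) (@segment_compact _ x1 (x1 + n%:R)) t01.
  rewrite mink_comb_itv // -/z => /le_trans; rewrite -lee_fin; apply.
  rewrite probability_fineK; last exact: measurable_itv.
  apply: le_measure; rewrite ?inE; try exact: measurable_itv.
  by move=> y /=; rewrite !in_itv /= => /andP[-> _].
have u_gt0 : \forall n \near \oo, 0 < u n by exact: cvgr_gt (upper_tail_cvg x0) _ G0.
have v_gt0 : \forall n \near \oo, 0 < v n by exact: cvgr_gt (upper_tail_cvg x1) _ G1.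
have ln_cvg : (fun n => (1 - t) * ln (u n) + t * ln (v n)) @ \oo -->
    (1 - t) * ln (G x0) + t * ln (G x1).
  apply: cvgD; apply: cvgM; try exact: cvg_cst.
    exact: (cvg_comp _ _ (upper_tail_cvg x0) (continuous_ln G0)).
  exact: (cvg_comp _ _ (upper_tail_cvg x1) (continuous_ln G1)).
apply: (cvgr_to_le ln_cvg); near=> n.
have un : 0 < u n by near: n.
have vn : 0 < v n by near: n.
have uv_gt0 : 0 < u n `^ (1 - t) * v n `^ t by rewrite mulr_gt0 // powR_gt0.
rewrite -(ln_powR (u n)) -(ln_powR (v n)) -lnM ?posrE ?powR_gt0 //.
by rewrite ler_ln ?posrE //; exact: lt_le_trans uv_gt0 (uv_le n).
Unshelve. all: by end_near.
Qed.

(* [a] is the convex combination of [0] and [a r] with weight [1/r], and [G 0 >= 1/2]. *)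
Lemma upper_tail_dilate_le (a r : R) : 0 < a -> 1 < r ->
  G (a * r) <= G a * expR ((r - 1) * ln (2 * G a)).
Proof.
move=> a0 r1; have Ga_ge0 := upper_tail_ge0 a.
have [Gar_gt0|Gar_le0] := ltP 0 (G (a * r)); last first.
  by apply: le_trans Gar_le0 _; rewrite mulr_ge0 // ltW // expR_gt0.
have Gar_le : G (a * r) <= G a by apply: upper_tail_le; rewrite ler_peMr //; lra.
have Ga_gt0 : 0 < G a by exact: lt_le_trans Gar_gt0 Gar_le.
have r0 : 0 < r by lra.
have t01 : 0 < r^-1 < 1 by rewrite invr_gt0 invf_lt1 ?r1 ?andbT //; lra.
have G0_gt0 : 0 < G 0 by apply: lt_le_trans upper_tail0; lra.
have := upper_tail_log_concave t01 G0_gt0 Gar_gt0.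
have -> : (1 - r^-1) * 0 + r^-1 * (a * r) = a by field; lra.
have lnG0 : - ln 2 <= ln (G 0).
  rewrite -lnV ?posrE // ler_ln ?posrE ?invr_gt0 //.
  by have := upper_tail0; rewrite div1r.
move=> lc_ineq.
have ln_le : ln (G (a * r)) <= ln (G a) + (r - 1) * ln (2 * G a).
  rewrite lnM ?posrE //.
  have : (1 - r^-1) * (- ln 2) <= (1 - r^-1) * ln (G 0) by rewrite ler_pM2l //; lra.
  have -> : ln (G (a * r)) = r * (r^-1 * ln (G (a * r))) by field; lra.
  have -> : ln (G a) + (r - 1) * (ln 2 + ln (G a)) = r * (ln (G a) + (1 - r^-1) * ln 2).
    by field; lra.
  by move=> h; rewrite ler_pM2l //; lra.
by rewrite -ler_ln ?posrE ?expR_gt0 ?mulr_gt0 // lnM ?posrE ?expR_gt0 // expRK.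
Qed.

End upper_tail.

Lemma mu_star_ge (R : realType) (mu : set R -> \bar R) (K : set R) (T : R) :
  (forall e, 0 < e -> exists2 d, 0 < d & forall eps, 0 < eps < Num.min d 1 ->
     ((T - e)%:E <= dil_ratio mu K eps)%E) ->
  (T%:E <= mu_star mu K)%E.
Proof.
move=> H; apply/lee_subgt0Pr => e e0; have [d d0 Hd] := H e e0.
apply: (@le_trans _ _ (ereal_inf [set dil_ratio mu K eps | eps in [set e1 : R | 0 < e1 < Num.min d 1]])).
  by apply: le_ereal_inf_tmp => _ [eps heps <-]; rewrite -EFinB; exact: Hd.
by apply: ereal_sup_ubound; exists d.
Qed.

Section dilation_arithmetic.
Variable R : realType.

(* [1 + M s <= expR (M s)] turns the geometric tail bound into a linear one. *)
Lemma decay_quotient_ge (g h eps s : R) : 0 <= g -> 2 * g <= 1 -> 0 < eps -> 2 * eps <= s ->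
  h <= g * expR (s * ln (2 * g)) ->
  2 * (2 * g) * (- ln (2 * g)) / (1 + (- ln (2 * g)) * s) <= 2 * (g - h) / eps.
Proof.
move=> g0 g1 e0 hs hb; set M := - ln (2 * g).
have M0 : 0 <= M by rewrite /M oppr_ge0 ln_le0.
have s0 : 0 <= s by lra.
set y := M * s; have y0 : 0 <= y by rewrite /y mulr_ge0.
have ey : expR (s * ln (2 * g)) <= (1 + y)^-1.
  have -> : s * ln (2 * g) = - y by rewrite /y /M; ring.
  by rewrite expRN lef_pV2 ?posrE ?expR_gt0 ?expR_ge1Dx //; lra.
have hy : h * (1 + y) <= g.
  rewrite -ler_pdivlMr; last lra.
  by apply: le_trans hb _; rewrite ler_wpM2l.
rewrite ler_pdivrMr; last lra.
rewrite [_ / eps * _]mulrAC ler_pdivlMr //.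
have : 0 <= g * M * (s - 2 * eps) by rewrite !mulr_ge0 // subr_ge0.
rewrite /y in hy *; nra.
Qed.

Lemma approx_div_1D_ge (q M eps e s : R) : 0 <= q -> 0 <= M -> 0 <= s <= 4 * eps ->
  eps * (8 * q * M ^+ 2 + 1) < e -> 2 * q * M - e <= 2 * q * M / (1 + M * s).
Proof.
move=> q0 M0 /andP[s0 hs] he.
set y := M * s; have y0 : 0 <= y by rewrite /y mulr_ge0.
have y4 : y <= 4 * M * eps by rewrite /y; nra.
have qM : 0 <= q * M by rewrite mulr_ge0.
have qMy : 2 * q * M * y <= e.
  have : 2 * q * M * y <= 8 * q * M ^+ 2 * eps.
    by have := ler_wpM2l qM y4; rewrite expr2; nra.
  nra.
rewrite ler_pdivlMr; nra.
Qed.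

End dilation_arithmetic.

Section symmetric_interval.
Variables (R : realType) (mu : probability R R).
Hypothesis sym_mu : symmetric_measure mu.
Local Notation G := (upper_tail mu).

Lemma dil_ratio_sym_itv (a eps : R) : 0 < a -> 0 < eps < 1 ->
  dil_ratio mu [set` `]-a, a[] eps =
  (2 * (G a - G (a * ((1 + eps) / (1 - eps)))) / eps)%:E.
Proof.
move=> a0 he; have /andP[e0 e1] := he.
set b := a * (1 + eps) / (1 - eps).
have b0 : 0 < b by rewrite /b -mulrA mulr_gt0 // divr_gt0 //; lra.
rewrite /dil_ratio dil_set_sym_itv // -/b.
rewrite -[mu [set` `]-b, b[]](probability_fineK mu) ?measurable_itv //.
rewrite -[mu [set` `]-a, a[]](probability_fineK mu) ?measurable_itv //.
rewrite -EFinB -EFinM !probability_sym_itv // /b -mulrA.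
by congr _%:E; field; lra.
Qed.

Hypothesis lc_mu : log_concave mu.

Lemma dil_ratio_sym_itv_ge (a eps : R) : 0 < a -> 0 < eps <= 1 / 2 ->
  ((2 * (2 * G a) * (- ln (2 * G a)) / (1 + (- ln (2 * G a)) * (2 * eps / (1 - eps))))%:E
     <= dil_ratio mu [set` `](- a)%R, a[] eps)%E.
Proof.
move=> a0 /andP[e0 e_half].
have r1 : 1 < (1 + eps) / (1 - eps) by rewrite ltr_pdivlMr; lra.
rewrite dil_ratio_sym_itv //; last by rewrite e0; lra.
rewrite lee_fin; apply: decay_quotient_ge => //.
- exact: upper_tail_ge0.
- by have := upper_tail_le_half mu sym_mu a a0; lra.
- by rewrite ler_pdivlMr; nra.
have -> : 2 * eps / (1 - eps) = (1 + eps) / (1 - eps) - 1 by field; lra.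
exact: upper_tail_dilate_le.
Qed.

Lemma mu_star_sym_itv (a : R) : 0 < a ->
  ((2 * (2 * G a) * (- ln (2 * G a)))%:E <= mu_star mu [set` `](- a)%R, a[])%E.
Proof.
move=> a0; set q := 2 * G a; set M := - ln q.
have q0 : 0 <= q by rewrite mulr_ge0 // upper_tail_ge0.
have M0 : 0 <= M.
  by rewrite oppr_ge0 ln_le0 //; have := upper_tail_le_half mu sym_mu a a0; rewrite /q; lra.
set C := 8 * q * M ^+ 2 + 1.
have C0 : 0 < C by rewrite /C ltr_wpDl // mulr_ge0 ?sqr_ge0 // mulr_ge0.
apply: mu_star_ge => e e0; exists (Num.min (1 / 2) (e / C)).
  by rewrite lt_min; apply/andP; split; [lra | exact: divr_gt0].
move=> eps /andP[e_gt0]; rewrite !lt_min => /andP[/andP[e_half eC] _].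
apply: (le_trans _ (dil_ratio_sym_itv_ge a eps a0 _)); last by rewrite e_gt0 ltW.
rewrite lee_fin; apply: (@approx_div_1D_ge _ q M eps) => //; last by move: eC; rewrite ltr_pdivlMr.
by apply/andP; split; [rewrite divr_ge0 | rewrite ler_pdivrMr]; nra.
Qed.

End symmetric_interval.

Lemma mu_star_setT (R : realType) (mu : probability R R) : (0%:E <= mu_star mu setT)%E.
Proof.
apply: mu_star_ge => e e0; exists 1 => // eps _.
by rewrite /dil_ratio /dil_set setTU probability_setT subee // mul0e lee_fin; lra.
Qed.

Theorem propositionp (R : realType) (mu : probability R R) :
  symmetric_measure mu -> log_concave mu ->
  forall K : set R, Ks1 K ->
    ((- 2 * (1 - fine (mu K)) * ln (1 - fine (mu K)))%:E <= mu_star mu K)%E.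
Proof.
move=> sym_mu lc_mu K /Ks1_setT_or_sym_itv [->|[a a0 ->]].
  by rewrite probability_setT /= subrr mulr0 mul0r; exact: mu_star_setT.
rewrite probability_sym_itv //.
have -> : 1 - (1 - 2 * upper_tail mu a) = 2 * upper_tail mu a by ring.
rewrite mulNr mulNr -mulrN.
exact: mu_star_sym_itv.
Qed.
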